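(* Let $(c_n)_{n\ge 0}$ be the sequence defined in the context. Then $c_0=0$, $c_1=c_2=1$, $c_3=0$, and $$c_{8n-1}=c_{8n}=c_{8n+1}=c_{8n+2}=c_{2n-1}\quad\text{for all } n\ge 1,$$ $$c_{8n+3}=c_{8n+4}=c_{8n+5}=c_{8n+6}=0\quad\text{for all } n\ge 0.$$
   Context: For $n\in\mathbb{N}$ let $s_2(n)$ be the sum of the binary digits of $n$ and $t_n=s_2(n)\bmod 2$ (the Prouhet–Thue–Morse sequence). Let $F(X)=\sum_{n\ge1}t_nX^n\in\mathbb{F}_2[[X]]$ and let $G(X)=\sum_{n\ge1}c_nX^n\in\mathbb{F}_2[[X]]$ be its compositional inverse, i.e. $F(G(X))=G(F(X))=X$; set $c_0=0$. The $c_n$ are identified with integers in $\{0,1\}$. *)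

From mathcomp Require Import all_boot all_algebra.
Set Implicit Arguments. Unset Strict Implicit. Unset Printing Implicit Defensive.
Import GRing.Theory.
Local Open Scope ring_scope.

(* sum of binary digits of n: bit i of n is odd (n %/ 2^i); bits i > n vanish *)
Definition s2 (n : nat) : nat := (\sum_(i < n.+1) odd (n %/ 2 ^ i))%N.

Definition tm (n : nat) : 'F_2 := (odd (s2 n))%:R.

Definition series := nat -> 'F_2.

Definition Fser : series := fun n => if n is 0 then 0 else tm n.

Definition Xser : series := fun n => (n == 1)%:R.

Definition smul (a b : series) : series :=
  fun n => \sum_(i < n.+1) a i * b (n - i)%N.

Fixpoint spow (a : series) (k : nat) : series :=
  match k with
  | 0 => fun n => (n == 0)%:R
  | k.+1 => smul a (spow a k)
  end.

(* composition f(g(X)), meaningful when g 0 = 0 (then [X^n] g^k = 0 for k > n) *)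
Definition scomp (f g : series) : series :=
  fun n => \sum_(k < n.+1) f k * spow g k n.

From HB Require Import structures.
From mathcomp Require Import all_boot all_algebra.
From mathcomp Require boolp.
From mathcomp Require Import ring zify.
Set Implicit Arguments. Unset Strict Implicit. Unset Printing Implicit Defensive.
Import GRing.Theory.
Local Open Scope ring_scope.

(* Over F_2 the relations t_(2n) = t_n and t_(2n+1) = 1 + t_n say that
   F = (1 + X) F^2 + X / (1 + X^2), i.e. Q(X, F) = 0 for
   Q(x, y) = x + (1 + x)^2 y + (1 + x)^3 y^2.  Composing with c turns this into
   Q(c, X) = 0, i.e. c = X ((1 + c)^2 + X (1 + c)^3), and the right-hand side is
   a contraction for the X-adic metric, so it has at most one solution.
   In characteristic 2, Q(X (1 + X) u^2, X) = X (1 + X) S(u)^2 for a cubic S with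
   (1 + X u) S(u) = 1 + u + X^3 (1 + X) u^4; hence the solution is X (1 + X) U^2,
   where U = 1 + X^3 (1 + X) U^4.  So c_(n+1) = U_(n/2), and the quartic equation
   gives U_(4q+1) = U_(4q+2) = 0 and U_(4q+3) = U_(4q+4) = U_q. *)

Lemma big_ord_widen_idx (T : Type) (idx : T) (op : Monoid.law idx) m M
    (F : nat -> T) :
  (m <= M)%N -> (forall i, (m <= i < M)%N -> F i = idx) ->
  \big[op/idx]_(i < m) F i = \big[op/idx]_(i < M) F i.
Proof.
move=> le_mM F_idx; rewrite (big_ord_widen _ _ le_mM) big_mkcond.
apply: eq_bigr => i _; case: (ltnP i m) => // le_mi.
by rewrite F_idx ?le_mi ?ltn_ord.
Qed.

Lemma coef_exp_poly_lt (R : nzRingType) (q : {poly R}) k n :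
  q`_0 = 0 -> (n < k)%N -> (q ^+ k)`_n = 0.
Proof.
move=> q0; elim: k n => [//|k IHk] n lt_nk.
rewrite exprS coefM big1 //; case=> -[|i] lt_in _ /=; first by rewrite q0 mul0r.
by rewrite IHk ?mulr0 //; lia.
Qed.

Lemma coef_comp_poly_low (R : comNzRingType) (p q : {poly R}) n :
  q`_0 = 0 -> (p \Po q)`_n = \sum_(k < n.+1) p`_k * (q ^+ k)`_n.
Proof.
move=> q0; rewrite coef_comp_poly; set F := fun k => p`_k * (q ^+ k)`_n.
transitivity (\sum_(k < size p + n.+1) F k).
  apply: big_ord_widen_idx (leq_addr _ _) _ => k /andP[le_pk _].
  by rewrite /F nth_default ?mul0r.
symmetry; apply: big_ord_widen_idx (leq_addl _ _) _ => k /andP[lt_nk _].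
by rewrite /F coef_exp_poly_lt ?mulr0.
Qed.

(** * Formal power series *)

Record ps (R : Type) := PS { coef : nat -> R }.

HB.instance Definition _ (R : Type) := boolp.gen_eqMixin (ps R).
HB.instance Definition _ (R : Type) := boolp.gen_choiceMixin (ps R).

Lemma ps_ext (R : Type) (a b : ps R) : coef a =1 coef b -> a = b.
Proof. by case: a; case: b => f g /= eq_gf; congr PS; apply: boolp.funext. Qed.

Section PsRingAxioms.
Variable R : comNzRingType.
Implicit Types a b c : ps R.

Definition ps0 : ps R := PS (fun=> 0).
Definition addps a b := PS (fun n => coef a n + coef b n).
Definition oppps a := PS (fun n => - coef a n).
Definition ps1 : ps R := PS (fun n => (n == 0)%:R).
Definition mulps a b := PS (fun n => \sum_(i < n.+1) coef a i * coef b (n - i)).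

Definition ps_trunc N a : {poly R} := \poly_(i < N.+1) coef a i.

Lemma coef_ps_trunc N a i : (i <= N)%N -> (ps_trunc N a)`_i = coef a i.
Proof. by rewrite coef_poly ltnS => ->. Qed.

Lemma coef_mulpsE n a b (p q : {poly R}) :
  (forall i, (i <= n)%N -> p`_i = coef a i) ->
  (forall i, (i <= n)%N -> q`_i = coef b i) ->
  coef (mulps a b) n = (p * q)`_n.
Proof.
move=> pa qb; rewrite coefM; apply: eq_bigr => i _.
by rewrite pa ?qb ?leq_subr // -ltnS.
Qed.

Lemma coef_mulps_trunc n a b i :
  (i <= n)%N -> coef (mulps a b) i = (ps_trunc n a * ps_trunc n b)`_i.
Proof.
move=> le_in; apply: coef_mulpsE => j le_ji;
  by rewrite coef_ps_trunc // (leq_trans le_ji).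
Qed.

Lemma addpsA : associative addps.
Proof. by move=> a b c; apply: ps_ext => n /=; rewrite addrA. Qed.
Lemma addpsC : commutative addps.
Proof. by move=> a b; apply: ps_ext => n /=; rewrite addrC. Qed.
Lemma add0ps : left_id ps0 addps.
Proof. by move=> a; apply: ps_ext => n /=; rewrite add0r. Qed.
Lemma addNps : left_inverse ps0 oppps addps.
Proof. by move=> a; apply: ps_ext => n /=; rewrite addNr. Qed.

Lemma mulpsA : associative mulps.
Proof.
move=> a b c; apply: ps_ext => n; set t := ps_trunc n.
have tE x i : (i <= n)%N -> (t x)`_i = coef x i by exact: coef_ps_trunc.
have tME x y i : (i <= n)%N -> (t x * t y)`_i = coef (mulps x y) i.
  by move=> le_in; rewrite (coef_mulps_trunc _ _ le_in).
transitivity ((t a * (t b * t c))`_n); first exact: coef_mulpsE (tE a) (tME b c).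
by rewrite mulrA; symmetry; exact: coef_mulpsE (tME a b) (tE c).
Qed.

Lemma mulpsC : commutative mulps.
Proof.
by move=> a b; apply: ps_ext => n; rewrite !(coef_mulps_trunc _ _ (leqnn n)) mulrC.
Qed.

Lemma mul1ps : left_id ps1 mulps.
Proof.
move=> a; apply: ps_ext => n /=.
by rewrite big_ord_recl subn0 mul1r big1 ?addr0 // => i _; rewrite mul0r.
Qed.

Lemma mulpsDl : left_distributive mulps addps.
Proof.
move=> a b c; apply: ps_ext => n /=; rewrite -big_split /=.
by apply: eq_bigr => i _; rewrite mulrDl.
Qed.

Lemma ps1_neq0 : ps1 != ps0.
Proof. by apply/eqP => /(congr1 (fun a => coef a 0%N)) /eqP; rewrite oner_eq0. Qed.

End PsRingAxioms.

HB.instance Definition _ (R : comNzRingType) :=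
  GRing.isZmodule.Build (ps R) (@addpsA R) (@addpsC R) (@add0ps R) (@addNps R).
HB.instance Definition _ (R : comNzRingType) :=
  GRing.Zmodule_isComNzRing.Build (ps R)
    (@mulpsA R) (@mulpsC R) (@mul1ps R) (@mulpsDl R) (@ps1_neq0 R).

Section PsTheory.
Variable R : comNzRingType.
Implicit Types a b g : ps R.

Lemma coef_psD a b n : coef (a + b) n = coef a n + coef b n. Proof. by []. Qed.
Lemma coef_psM a b n :
  coef (a * b) n = \sum_(i < n.+1) coef a i * coef b (n - i). Proof. by []. Qed.
Lemma coef_ps0 n : coef (0 : ps R) n = 0. Proof. by []. Qed.

Definition psX : ps R := PS (fun n => (n == 1)%:R).

Lemma coef_psXM0 a : coef (psX * a) 0 = 0.
Proof. by rewrite coef_psM big_ord1 mul0r. Qed.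

Lemma coef_psXMS a n : coef (psX * a) n.+1 = coef a n.
Proof.
rewrite coef_psM 2!big_ord_recl /= mul0r mul1r add0r subn1 big1 ?addr0 // => i _.
by rewrite mul0r.
Qed.

Lemma coef_psXnM k a n :
  coef (psX ^+ k * a) n = if (k <= n)%N then coef a (n - k) else 0.
Proof.
elim: k n => [|k IHk] n; first by rewrite mul1r subn0.
rewrite exprS -mulrA; case: n => [|n]; first by rewrite coef_psXM0.
by rewrite coef_psXMS IHk subSS.
Qed.

Lemma mulps_eq0_coef01 a b : coef a 0 = 1 -> a * b = 0 -> b = 0.
Proof.
move=> a01 ab0; apply: ps_ext => n; elim/ltn_ind: n => n IHn.
have := congr1 (fun p => coef p n) ab0.
rewrite coef_psM big_ord_recl a01 mul1r subn0 big1 ?addr0 // => i _.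
by rewrite IHn ?coef_ps0 ?mulr0 // subnSK ?leq_subr.
Qed.

(** * Contractions and their fixed points *)

Definition ps_agree n a b := forall i, (i < n)%N -> coef a i = coef b i.

Lemma ps_agreeD n a b a' b' :
  ps_agree n a a' -> ps_agree n b b' -> ps_agree n (a + b) (a' + b').
Proof. by move=> eq_a eq_b i lt_in; rewrite !coef_psD eq_a ?eq_b. Qed.

Lemma ps_agreeM n a b a' b' :
  ps_agree n a a' -> ps_agree n b b' -> ps_agree n (a * b) (a' * b').
Proof.
move=> eq_a eq_b i lt_in; rewrite !coef_psM; apply: eq_bigr => j _.
have le_ji : (j <= i)%N by rewrite -ltnS.
by rewrite eq_a ?eq_b ?(leq_ltn_trans (leq_subr j i)) ?(leq_ltn_trans le_ji).
Qed.

Lemma ps_agreeXn n k a b : ps_agree n a b -> ps_agree n (a ^+ k) (b ^+ k).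
Proof. by move=> eq_ab; elim: k => [//|k IHk]; rewrite !exprS; apply: ps_agreeM. Qed.

Lemma ps_agree_mulX n a b : ps_agree n a b -> ps_agree n.+1 (psX * a) (psX * b).
Proof. by move=> eq_ab [|i] lt_in; rewrite ?coef_psXM0 // !coef_psXMS eq_ab. Qed.

Definition contractive (f : ps R -> ps R) :=
  forall n a b, ps_agree n a b -> ps_agree n.+1 (f a) (f b).

Section Contraction.
Variable f : ps R -> ps R.
Hypothesis f_contr : contractive f.

Lemma contractive_fixpoint_uniq a b : f a = a -> f b = b -> a = b.
Proof.
move=> fa fb; suff eq_ab n : ps_agree n a b.
  by apply: ps_ext => n; apply: (eq_ab n.+1).
by elim: n => [//|n IHn]; rewrite -fa -fb; apply: f_contr.
Qed.

(* Coefficient [n] of the iterates [iter k f 0] is constant for [k > n]. *)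
Definition ps_fix := PS (fun n => coef (iter n.+1 f 0) n).

Lemma ps_agree_iter n m : ps_agree n (iter n f 0) (iter (n + m) f 0).
Proof. by elim: n => [//|n IHn]; rewrite addSn; apply: f_contr. Qed.

Lemma ps_fixE : f ps_fix = ps_fix.
Proof.
have fix_iter n : ps_agree n.+1 ps_fix (iter n.+1 f 0).
  by move=> i lt_in; rewrite -(subnKC lt_in); apply: ps_agree_iter.
apply: ps_ext => n; rewrite (f_contr (fix_iter n)) //.
by rewrite -iterS -[n.+2]addn1 -(@ps_agree_iter n.+1 1 n).
Qed.

End Contraction.

Lemma coef_ps_truncXn N g k i :
  (i <= N)%N -> coef (g ^+ k) i = (ps_trunc N g ^+ k)`_i.
Proof.
elim: k i => [|k IHk] i le_iN; first by rewrite !expr0 coef1.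
rewrite !exprS; apply: coef_mulpsE => j le_ji; have le_jN := leq_trans le_ji le_iN.
  exact: coef_ps_trunc.
by rewrite IHk.
Qed.

Definition comp_ps g a := PS (fun n => \sum_(k < n.+1) coef a k * coef (g ^+ k) n).

Section Composition.
Variable g : ps R.
Hypothesis g0 : coef g 0 = 0.

Lemma coef_comp_ps_trunc N a i :
  (i <= N)%N -> coef (comp_ps g a) i = (ps_trunc N a \Po ps_trunc N g)`_i.
Proof.
move=> le_iN; rewrite coef_comp_poly_low ?coef_ps_trunc //.
apply: eq_bigr => k _; have le_kN : (k <= N)%N by apply: leq_trans le_iN; rewrite -ltnS.
by rewrite coef_ps_trunc // (coef_ps_truncXn _ _ le_iN).
Qed.

Lemma comp_ps0 : comp_ps g 0 = 0.
Proof. by apply: ps_ext => n /=; rewrite big1 // => k _; rewrite mul0r. Qed.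

Lemma comp_psD a b : comp_ps g (a + b) = comp_ps g a + comp_ps g b.
Proof.
apply: ps_ext => n /=; rewrite -big_split.
by apply: eq_bigr => k _; rewrite mulrDl.
Qed.

Lemma comp_psM a b : comp_ps g (a * b) = comp_ps g a * comp_ps g b.
Proof.
apply: ps_ext => n; pose t := @ps_trunc R n.
have tg0 : (t g)`_0 = 0 by rewrite coef_ps_trunc.
transitivity (((t a * t b) \Po t g)`_n).
  rewrite coef_comp_poly_low //; apply: eq_bigr => k _.
  have le_kn : (k <= n)%N by rewrite -ltnS.
  by rewrite (coef_mulps_trunc _ _ le_kn) (coef_ps_truncXn _ _ (leqnn n)).
rewrite comp_polyM; symmetry; apply: coef_mulpsE => i le_in;
  by rewrite (coef_comp_ps_trunc _ le_in).
Qed.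

Lemma comp_ps1 : comp_ps g 1 = 1.
Proof.
apply: ps_ext => n /=; rewrite big_ord_recl mul1r expr0 big1 ?addr0 // => k _.
by rewrite mul0r.
Qed.

Lemma comp_psXn a k : comp_ps g (a ^+ k) = comp_ps g a ^+ k.
Proof.
by elim: k => [|k IHk]; rewrite ?comp_ps1 // !exprS comp_psM IHk.
Qed.

Lemma comp_psX : comp_ps g psX = g.
Proof.
apply: ps_ext => -[|n] /=; first by rewrite big_ord1 mul0r g0.
rewrite 2!big_ord_recl big1 ?addr0 => [|k _]; last by rewrite mul0r.
by rewrite mul0r mul1r add0r expr1.
Qed.

End Composition.

End PsTheory.

Arguments psX {R}.

(** * Identities in characteristic 2 *)

Definition tm_eqn (R : pzRingType) (x y : R) :=
  x + y * ((1 + x) ^+ 2 + y * (1 + x) ^+ 3).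

Definition tm_cubic (R : pzRingType) (x u : R) :=
  1 + (1 + x) * u + x * (1 + x) * u ^+ 2 * (1 + x * u).

Section Char2.
Variable R : comPzRingType.
Hypothesis two0 : 2 = 0 :> R.

Lemma char2_addrr (x : R) : x + x = 0.
Proof. by ring: two0. Qed.

Lemma char2_addr_eq0 (x y : R) : x + y = 0 -> x = y.
Proof. by move=> xy0; rewrite -[y]add0r -xy0; ring: two0. Qed.

Lemma char2_sqrrD (x y : R) : (x + y) ^+ 2 = x ^+ 2 + y ^+ 2.
Proof. by ring: two0. Qed.

Lemma tm_eqn_halving (x f w : R) :
  f = (1 + x) * f ^+ 2 + w -> (1 + x ^+ 2) * w = x -> tm_eqn x f = 0.
Proof.
move=> fE wE; have -> : tm_eqn x f =
    (1 + x) ^+ 2 * (f + ((1 + x) * f ^+ 2 + w)) + ((1 + x ^+ 2) * w + x).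
  by rewrite /tm_eqn; ring: two0.
by rewrite -fE wE !char2_addrr mulr0 addr0.
Qed.

Lemma tm_cubic_quartic (x u : R) :
  (1 + x * u) * tm_cubic x u = 1 + u + x ^+ 3 * (1 + x) * u ^+ 4.
Proof. by rewrite /tm_cubic; ring: two0. Qed.

(* [ring: two0] only cancels coefficients equal to 2: the squares are expanded
   first and [x * (1 + x)] is kept abstract so that no larger ones appear. *)
Lemma tm_eqn_sqr_cubic (x u : R) :
  tm_eqn (x * (1 + x) * u ^+ 2) x = x * (1 + x) * tm_cubic x u ^+ 2.
Proof.
rewrite /tm_eqn /tm_cubic; set a := x * (1 + x); have aE : a = x * (1 + x) by [].
by rewrite [(1 + _) ^+ 3]exprS !char2_sqrrD; clearbody a; ring: two0 aE.
Qed.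

End Char2.

Lemma F2_two : 2 = 0 :> 'F_2.
Proof. exact: pchar_Fp_0. Qed.

Lemma F2_sqr (x : 'F_2) : x ^+ 2 = x.
Proof. by case: x => -[|[|[]]] // ?; apply: val_inj. Qed.

Lemma ps_F2_two : 2 = 0 :> ps 'F_2.
Proof. by apply: ps_ext => n; rewrite coef_psD (char2_addrr F2_two). Qed.

Lemma coef_ps_sqr (a : ps 'F_2) n :
  coef (a ^+ 2) n = if odd n then 0 else coef a n./2.
Proof.
have pchar2 : 2 \in [pchar {poly 'F_2}] by rewrite pchar_poly pchar_Fp.
rewrite (coef_ps_truncXn _ _ (leqnn n)) -(pFrobenius_autE pchar2).
rewrite /ps_trunc poly_def rmorph_sum.
rewrite (eq_bigr (fun i : 'I_n.+1 => coef a i *: 'X^(i.*2))) => [|i _]; last first.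
  by rewrite -[LHS]/((coef a i *: 'X^i) ^+ 2) exprZn F2_sqr -exprM muln2.
rewrite coef_sumMXn; case: ifPn => [odd_n | even_n].
  rewrite big_pred0 // => i; apply/negP => /eqP eq_n.
  by rewrite -eq_n odd_double in odd_n.
have lt_n : (n./2 < n.+1)%N by rewrite ltnS -divn2 leq_div.
rewrite (big_pred1 (Ordinal lt_n)) // => i /=.
by rewrite -(inj_eq val_inj) /=; apply/eqP/eqP; move: even_n; lia.
Qed.

Lemma coef_psX_sqr (a : ps 'F_2) n :
  coef (psX * a ^+ 2) n = if odd n then coef a n./2 else 0.
Proof.
case: n => [|n]; rewrite ?coef_psXM0 // coef_psXMS coef_ps_sqr /=.
by case: ifP => //= even_n; rewrite uphalf_half even_n.
Qed.

Lemma coef_psX1X_sqr (a : ps 'F_2) n :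
  coef (psX * (1 + psX) * a ^+ 2) n.+1 = coef a n./2.
Proof.
rewrite mulrDr mulr1 mulrDl -mulrA coef_psD coef_psX_sqr coef_psXMS coef_psX_sqr /=.
case: (boolP (odd n)) => /= [_ | even_n]; first by rewrite add0r.
by rewrite addr0 uphalf_half (negbTE even_n).
Qed.

Lemma coef_ps_exp4 (a : ps 'F_2) n :
  coef (a ^+ 4) n = if (4 %| n)%N then coef a (n %/ 4) else 0.
Proof.
have -> : a ^+ 4 = (a ^+ 2) ^+ 2 by rewrite -exprM.
rewrite !coef_ps_sqr; do ![case: ifP => ?] => //; try (exfalso; lia).
by congr coef; lia.
Qed.

Lemma coef_psXnM_exp4 (a : ps 'F_2) k n :
  coef (psX ^+ k * a ^+ 4) n =
    if (k <= n)%N && (4 %| n - k)%N then coef a ((n - k) %/ 4)%N else 0.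
Proof. by rewrite coef_psXnM coef_ps_exp4; case: (k <= n)%N. Qed.

(** * The Thue--Morse series *)

Lemma s2E n K : (n < K)%N -> s2 n = (\sum_(i < K) odd (n %/ 2 ^ i))%N.
Proof.
move=> lt_nK; pose F i := nat_of_bool (odd (n %/ 2 ^ i)).
apply: (@big_ord_widen_idx _ _ _ _ _ F) => // i /andP[lt_ni _].
rewrite /F divn_small //; apply: leq_trans (ltn_expl n (ltnSn 1)) _.
by rewrite leq_exp2l // ltnW.
Qed.

Lemma s2_rec n : s2 n = (odd n + s2 n./2)%N.
Proof.
case: n => [//|n]; rewrite {1}/s2 big_ord_recl expn0 divn1 (@s2E _ n.+1); last by lia.
by congr addn; apply: eq_bigr => i _; rewrite expnS divnMA divn2.
Qed.

Lemma tm_double n : tm n.*2 = tm n.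
Proof. by rewrite /tm s2_rec odd_double doubleK. Qed.

Lemma tm_doubleS n : tm n.*2.+1 = 1 + tm n.
Proof.
rewrite /tm s2_rec -[n.*2.+1]/(true + n.*2)%N half_bit_double !oddD odd_double.
by case: (odd (s2 n)); apply: val_inj.
Qed.

Lemma Fser_tm : Fser =1 tm.
Proof. by case=> //; rewrite /tm /s2 big_ord1. Qed.

Definition odd_ps : ps 'F_2 := PS (fun n => (odd n)%:R).

Lemma tm_halving : PS tm = (1 + psX) * PS tm ^+ 2 + odd_ps.
Proof.
apply: ps_ext => n; rewrite mulrDl mul1r !coef_psD coef_ps_sqr coef_psX_sqr /=.
rewrite -{1}(odd_double_half n); case: (odd n) => /=.
  by rewrite add0r tm_doubleS addrC.
by rewrite tm_double !addr0.
Qed.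

Lemma odd_psE : (1 + psX ^+ 2) * odd_ps = psX.
Proof.
apply: ps_ext => n; rewrite mulrDl mul1r coef_psD coef_psXnM.
case: n => [|[|n]] //=; rewrite ?addr0 // subn2 /=.
by rewrite negbK (char2_addrr F2_two).
Qed.

Lemma tm_eqn_tm : tm_eqn psX (PS tm) = 0.
Proof. by apply: (tm_eqn_halving ps_F2_two); [exact: tm_halving | exact: odd_psE]. Qed.

Lemma spow_ps (g : series) k : spow g k = coef (PS g ^+ k).
Proof. by elim: k => [//|k IHk] /=; rewrite exprS IHk. Qed.

Lemma scomp_ps (f g : series) : scomp f g =1 coef (comp_ps (PS g) (PS f)).
Proof. by move=> n; apply: eq_bigr => k _; rewrite spow_ps. Qed.

Lemma comp_ps_tm_eqn (R : comNzRingType) (g a b : ps R) : coef g 0 = 0 ->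
  comp_ps g (tm_eqn a b) = tm_eqn (comp_ps g a) (comp_ps g b).
Proof. by move=> g0; rewrite /tm_eqn !(comp_psD, comp_psM, comp_psXn, comp_ps1). Qed.

Lemma tm_eqn_inverse (c : series) :
  c 0%N = 0 -> scomp Fser c = Xser -> tm_eqn (PS c) psX = 0.
Proof.
move=> c0 Fc; have FE : PS Fser = PS tm by apply: ps_ext; exact: Fser_tm.
have FcX : comp_ps (PS c) (PS tm) = psX.
  by apply: ps_ext => n; rewrite -FE -scomp_ps Fc.
rewrite -FcX -{1}(@comp_psX _ (PS c) c0) -comp_ps_tm_eqn //.
by rewrite tm_eqn_tm comp_ps0.
Qed.

(** * The inverse series *)

Definition inv_map (R : comNzRingType) (y : ps R) :=
  psX * ((1 + y) ^+ 2 + psX * (1 + y) ^+ 3).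

Lemma inv_map_contractive (R : comNzRingType) : contractive (@inv_map R).
Proof.
move=> n a b eq_ab; apply: ps_agree_mulX.
have eq_1ab : ps_agree n (1 + a) (1 + b) by apply: ps_agreeD.
apply: ps_agreeD; first exact: ps_agreeXn eq_1ab.
apply: ps_agreeM; [by [] | exact: ps_agreeXn eq_1ab].
Qed.

Lemma tm_eqn_uniq (a b : ps 'F_2) :
  tm_eqn a psX = 0 -> tm_eqn b psX = 0 -> a = b.
Proof.
move=> /(char2_addr_eq0 ps_F2_two) aE /(char2_addr_eq0 ps_F2_two) bE.
apply: (contractive_fixpoint_uniq (@inv_map_contractive _)).
  by rewrite /inv_map -aE.
by rewrite /inv_map -bE.
Qed.

Definition quartic_map (R : comNzRingType) (u : ps R) :=
  1 + psX ^+ 3 * (1 + psX) * u ^+ 4.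

Lemma quartic_map_contractive (R : comNzRingType) : contractive (@quartic_map R).
Proof.
move=> n a b eq_ab; apply: ps_agreeD => //.
rewrite exprS -!mulrA; apply: ps_agree_mulX.
by do 3 (apply: ps_agreeM; first by []); exact: ps_agreeXn eq_ab.
Qed.

Definition quartic_root : ps 'F_2 := ps_fix (@quartic_map _).

Lemma quartic_rootE : quartic_map quartic_root = quartic_root.
Proof. exact: ps_fixE (@quartic_map_contractive _). Qed.

Lemma tm_cubic_quartic_root : tm_cubic psX quartic_root = 0.
Proof.
apply: (@mulps_eq0_coef01 _ (1 + psX * quartic_root)).
  by rewrite coef_psD coef_psXM0 addr0.
rewrite (tm_cubic_quartic ps_F2_two) -[X in 1 + X + _]quartic_rootE.
by rewrite /quartic_map addrAC (char2_addrr ps_F2_two).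
Qed.

Definition inv_tm : ps 'F_2 := psX * (1 + psX) * quartic_root ^+ 2.

Lemma tm_eqn_inv_tm : tm_eqn inv_tm psX = 0.
Proof. by rewrite (tm_eqn_sqr_cubic ps_F2_two) tm_cubic_quartic_root expr0n mulr0. Qed.

Lemma coef_quartic_root q :
  [/\ coef quartic_root 0 = 1, coef quartic_root (4 * q + 1) = 0,
      coef quartic_root (4 * q + 2) = 0,
      coef quartic_root (4 * q + 3) = coef quartic_root q &
      coef quartic_root (4 * q + 4) = coef quartic_root q].
Proof.
have coefE n : coef quartic_root n = (n == 0)%:R
    + coef (psX ^+ 3 * quartic_root ^+ 4) n + coef (psX ^+ 4 * quartic_root ^+ 4) n.
  by rewrite -{1}quartic_rootE /quartic_map mulrDr mulr1 mulrDl -exprSr addrA.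
split; rewrite coefE !coef_psXnM_exp4;
  do ![case: eqP => ? | case: ifP => ?]; try (exfalso; lia);
  rewrite ?add0r ?addr0 //; congr coef; lia.
Qed.

Lemma inverse_eq_inv_tm (c : series) :
  c 0%N = 0 -> scomp Fser c = Xser -> PS c = inv_tm.
Proof. by move=> c0 Fc; apply: tm_eqn_uniq (tm_eqn_inverse c0 Fc) tm_eqn_inv_tm. Qed.

Theorem mainTheorem2 (c : nat -> 'F_2) :
  c 0%N = 0 ->
  scomp Fser c = Xser ->
  scomp c Fser = Xser ->
  [/\ c 0%N = 0, c 1%N = 1, c 2%N = 1 & c 3%N = 0] /\
      (forall n : nat, (1 <= n)%N ->
         [/\ c (8 * n - 1)%N = c (2 * n - 1)%N,
             c (8 * n)%N = c (2 * n - 1)%N,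
             c (8 * n + 1)%N = c (2 * n - 1)%N &
             c (8 * n + 2)%N = c (2 * n - 1)%N]) /\
      (forall n : nat,
         [/\ c (8 * n + 3)%N = 0, c (8 * n + 4)%N = 0,
             c (8 * n + 5)%N = 0 & c (8 * n + 6)%N = 0]).
Proof.
move=> c0 Fc _.
have cE n : c n.+1 = coef quartic_root n./2.
  by rewrite -[c n.+1]/(coef (PS c) n.+1) (inverse_eq_inv_tm c0 Fc) coef_psX1X_sqr.
have c_odd j : c j.*2.+1 = coef quartic_root j by rewrite cE doubleK.
have c_even j : c j.*2.+2 = coef quartic_root j by rewrite cE /= uphalf_double.
split; [|split].
- have [U0 U1 _ _ _] := coef_quartic_root 0.
  by rewrite (c_odd 0) (c_even 0) (c_odd 1) U0 U1.
- case=> [//|q] _; have [_ _ _ U3 U4] := coef_quartic_root q.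
  have -> : (2 * q.+1 - 1 = q.*2.+1)%N by lia.
  have -> : (8 * q.+1 - 1 = (4 * q + 3).*2.+1)%N by lia.
  have -> : (8 * q.+1 + 1 = (4 * q + 4).*2.+1)%N by lia.
  have -> : (8 * q.+1 + 2 = (4 * q + 4).*2.+2)%N by lia.
  have -> : (8 * q.+1 = (4 * q + 3).*2.+2)%N by lia.
  by rewrite !c_odd !c_even U3 U4.
- move=> n; have [_ U1 U2 _ _] := coef_quartic_root n.
  have -> : (8 * n + 3 = (4 * n + 1).*2.+1)%N by lia.
  have -> : (8 * n + 4 = (4 * n + 1).*2.+2)%N by lia.
  have -> : (8 * n + 5 = (4 * n + 2).*2.+1)%N by lia.
  have -> : (8 * n + 6 = (4 * n + 2).*2.+2)%N by lia.
  by rewrite !c_odd !c_even U1 U2.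
Qed.
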